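(* Let $P$ be (the right-angled hyperbolic realization of) the composition of compact right-angled hyperbolic polyhedra $P_1$ and $P_2$ along $k$-gonal faces $F_1\subset P_1$, $F_2\subset P_2$. Then $$\Gamma_P \cong \Gamma_{(P_1,F_1)} *_G \Gamma_{(P_2,F_2)}.$$ Here $G$ denotes $\Gamma_{F_1}\cong\Gamma_{F_2}$, embedded in $\Gamma_{(P_1,F_1)}$ and $\Gamma_{(P_2,F_2)}$ as these subgroups and identified with each other via the isomorphism induced by the face identification $F_1\cong F_2$.
   Context: For a compact right-angled hyperbolic polyhedron $P$ with faces $F_1,\dots,F_m$, the reflection group $\Gamma_P$ is generated by the reflections $r_i$ in the planes supporting the faces $F_i$. It has presentation $$\langle r_1,\dots,r_m \mid r_i^2=1,\ (r_ir_j)^2=1 \text{ whenever } F_i,F_j \text{ are adjacent}\rangle.$$ For a face $F$ of $P$, $\Gamma_{(P,F)}$ is the subgroup generated by reflections in all faces of $P$ other than $F$. For $i=1,2$, $\Gamma_{F_i}\subset \Gamma_{(P_i,F_i)}$ is the subgroup generated by the reflections in the $k$ faces of $P_i$ adjacent to $F_i$; it is the reflection group of a right-angled $k$-gon. Composition: glue $P_1,P_2$ along $F_1,F_2$ via a combinatorial isomorphism, delete the interiors of the $k$ edges of the identified face, and demote their endpoints to non-vertices. Faces adjacent to $F_1$ merge with the corresponding faces adjacent to $F_2$. The result is realizable as a right-angled hyperbolic polyhedron. *)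

From mathcomp Require Import all_boot.
Set Implicit Arguments. Unset Strict Implicit. Unset Printing Implicit Defensive.

Record Grp : Type := Grp_make {
  gcar :> Type;
  gmul : gcar -> gcar -> gcar;
  gone : gcar;
  ginv : gcar -> gcar;
  gmulA : forall x y z, gmul x (gmul y z) = gmul (gmul x y) z;
  gmul1x : forall x, gmul gone x = x;
  gmulx1 : forall x, gmul x gone = x;
  gmulVx : forall x, gmul (ginv x) x = gone;
  gmulxV : forall x, gmul x (ginv x) = gone }.

Definition is_hom (G H : Grp) (f : G -> H) : Prop :=
  forall x y, f (gmul x y) = gmul (f x) (f y).

Definition is_iso (G H : Grp) (f : G -> H) : Prop := is_hom f /\ bijective f.

Definition isomorphic (G H : Grp) : Prop := exists f : G -> H, is_iso f.

Definition RA_rels (V : Type) (gen : V -> Prop) (adj : V -> V -> Prop)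
  (K : Grp) (f : V -> K) : Prop :=
  (forall v, gen v -> gmul (f v) (f v) = gone K) /\
  (forall u v, gen u -> gen v -> adj u v ->
     gmul (gmul (f u) (f v)) (gmul (f u) (f v)) = gone K).

Definition IsRAPresented (V : Type) (gen : V -> Prop) (adj : V -> V -> Prop)
  (H : Grp) (s : V -> H) : Prop :=
  RA_rels gen adj s /\
  forall (K : Grp) (f : V -> K), RA_rels gen adj f ->
    exists h : H -> K,
      [/\ is_hom h, (forall v, gen v -> h (s v) = f v) &
          forall h' : H -> K, is_hom h' -> (forall v, gen v -> h' (s v) = f v) ->
            forall x, h' x = h x].

Definition IsAmalgam (G A B : Grp) (i : G -> A) (j : G -> B)
  (Q : Grp) (a : A -> Q) (b : B -> Q) : Prop :=
  [/\ is_hom a, is_hom b, (forall x, a (i x) = b (j x)) &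
   forall (K : Grp) (f : A -> K) (g : B -> K), is_hom f -> is_hom g ->
     (forall x, f (i x) = g (j x)) ->
     exists h : Q -> K,
       [/\ is_hom h, (forall x, h (a x) = f x), (forall y, h (b y) = g y) &
           forall h' : Q -> K, is_hom h' -> (forall x, h' (a x) = f x) ->
             (forall y, h' (b y) = g y) -> forall z, h' z = h z]].

Definition poly_graph (T : finType) (adj : rel T) : Prop :=
  symmetric adj /\ irreflexive adj.

(* F is a k-gonal face whose adjacent faces are c 0, ..., c (k-1) in cyclic
   order; consecutive ones are adjacent and no other two of them are
   (so they span a right-angled k-gon's reflection group). *)
Definition face_cycle (T : finType) (adj : rel T) (F : T) (k : nat)
  (c : 'I_k -> T) : Prop :=
  [/\ injective c,
      (forall x, adj F x <-> exists i, c i = x),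
      (forall i, adj (c i) (c (ordS i))) &
      (forall i j, adj (c i) (c j) -> j = ordS i \/ i = ordS j)].

Definition cyc_adj (k : nat) (i j : 'I_k) : Prop := j = ordS i \/ i = ordS j.

(* ---------- composition P1 #_{F1 = F2} P2 ----------
   Faces of P are represented inside T1 + T2: all inl x with x <> F1 (faces of
   P1 other than F1, the neighbours c1 i of F1 standing for the merged faces),
   and inr y for faces y of P2 other than F2 and not adjacent to F2.
   glue_norm sends a face of P2 to its representative (c2 i |-> inl (c1 i)). *)
Definition glue_norm (T1 T2 : finType) (k : nat) (c1 : 'I_k -> T1)
  (c2 : 'I_k -> T2) (u : T1 + T2) : T1 + T2 :=
  match u with
  | inl x => inl x
  | inr y => match [pick i | c2 i == y] with
             | Some i => inl (c1 i)
             | None => inr y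
             end
  end.

Definition glue_face (T1 T2 : finType) (k : nat) (F1 : T1) (F2 : T2)
  (c2 : 'I_k -> T2) (u : T1 + T2) : Prop :=
  match u with
  | inl x => x <> F1
  | inr y => y <> F2 /\ forall i, c2 i <> y
  end.

(* faces of P are adjacent iff they come from adjacent faces of P1 or of P2
   (the edges of F1 = F2 are deleted; the edges c_i/c_(i+1) of P1 and P2 fuse) *)
Definition glue_adj (T1 T2 : finType) (adj1 : rel T1) (adj2 : rel T2)
  (F1 : T1) (F2 : T2) (k : nat) (c1 : 'I_k -> T1) (c2 : 'I_k -> T2)
  (u v : T1 + T2) : Prop :=
  (exists x y, [/\ x <> F1, y <> F1, adj1 x y, u = inl x & v = inl y]) \/
  (exists x y, [/\ x <> F2, y <> F2, adj2 x y,
                   u = glue_norm c1 c2 (inr x) & v = glue_norm c1 c2 (inr y)]).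

(* We show
   Gamma_P ≅ Gamma_(P1,F1) *_G Gamma_(P2,F2) by writing down mutually inverse
   homomorphisms, both defined through universal properties:
   - phi : Gamma_P -> Q sends the reflection in a face coming from P1 (resp.
     from P2) to the image of the corresponding generator of Gamma_(P1,F1)
     (resp. Gamma_(P2,F2)); merged faces c1 i = c2 i are consistent because
     a and b agree on the common k-gon group G.
   - psi : Q -> Gamma_P is induced by the two obvious maps Gamma_(Pj,Fj) ->
     Gamma_P, which agree on G since both send the generators of G to the
     reflections in the merged faces.
   Both composites fix generators, hence are identities by the uniqueness
   parts of the universal properties. *)
From mathcomp Require Import all_boot.
Set Implicit Arguments. Unset Strict Implicit. Unset Printing Implicit Defensive.

Lemma hom_one (G H : Grp) (h : G -> H) : is_hom h -> h (gone G) = gone H.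
Proof.
move=> hh.
have idem : h (gone G) = gmul (h (gone G)) (h (gone G)) by rewrite -hh gmul1x.
by rewrite -[RHS](gmulVx (h (gone G))) {3}idem gmulA gmulVx gmul1x.
Qed.

Lemma hom_comp (G H K : Grp) (f : G -> H) (g : H -> K) :
  is_hom f -> is_hom g -> is_hom (fun x => g (f x)).
Proof. by move=> hf hg x y; rewrite hf hg. Qed.

Lemma hom_id (G : Grp) : is_hom (fun x : G => x).
Proof. by []. Qed.

Lemma isomorphic_of_inverse (G H : Grp) (f : G -> H) (g : H -> G) :
  is_hom f -> cancel f g -> cancel g f -> isomorphic G H.
Proof. by move=> hf fK gK; exists f; split=> //; exists g. Qed.

Lemma rels_hom (V : Type) (gen : V -> Prop) (adj : V -> V -> Prop)
  (H K : Grp) (f : V -> H) (h : H -> K) :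
  is_hom h -> RA_rels gen adj f -> RA_rels gen adj (fun v => h (f v)).
Proof.
move=> hh [sq comm]; split=> [v gv | u v gu gv uv].
  by rewrite -hh sq // hom_one.
by rewrite -!hh comm // hom_one.
Qed.

Lemma pres_hom_eq (V : Type) (gen : V -> Prop) (adj : V -> V -> Prop)
  (H : Grp) (s : V -> H) (K : Grp) (h1 h2 : H -> K) :
  IsRAPresented gen adj s -> is_hom h1 -> is_hom h2 ->
  (forall v, gen v -> h1 (s v) = h2 (s v)) -> forall x, h1 x = h2 x.
Proof.
move=> [rels univ] hh1 hh2 agree x.
have [h [_ _ uniq]] := univ K _ (rels_hom hh2 rels).
by rewrite (uniq h1) // (uniq h2).
Qed.

Lemma amalgam_hom_eq (G A B : Grp) (i : G -> A) (j : G -> B)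
  (Q : Grp) (a : A -> Q) (b : B -> Q) (K : Grp) (h1 h2 : Q -> K) :
  IsAmalgam i j a b -> is_hom h1 -> is_hom h2 ->
  (forall x, h1 (a x) = h2 (a x)) -> (forall y, h1 (b y) = h2 (b y)) ->
  forall z, h1 z = h2 z.
Proof.
move=> [ha hb hab univ] hh1 hh2 agreeA agreeB z.
have compat x : h2 (a (i x)) = h2 (b (j x)) by rewrite hab.
have [h [_ _ _ uniq]] :=
  univ K _ _ (hom_comp ha hh2) (hom_comp hb hh2) compat.
by rewrite (uniq h1) // (uniq h2).
Qed.

Lemma face_cycle_neq (T : finType) (adj : rel T) (F : T) (k : nat)
  (c : 'I_k -> T) :
  irreflexive adj -> face_cycle adj F c -> forall i, c i <> F.
Proof.
move=> irr [_ nbr _ _] i cF.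
have : adj F (c i) by apply/nbr; exists i.
by rewrite cF irr.
Qed.

Section Composition.

Variables (T1 T2 : finType) (adj1 : rel T1) (adj2 : rel T2).
Variables (F1 : T1) (F2 : T2) (k : nat) (c1 : 'I_k -> T1) (c2 : 'I_k -> T2).
Hypotheses (hP1 : poly_graph adj1) (hP2 : poly_graph adj2).
Hypotheses (hF1 : face_cycle adj1 F1 c1) (hF2 : face_cycle adj2 F2 c2).

Local Notation norm y := (glue_norm c1 c2 (inr y)).
Local Notation faceP := (glue_face F1 F2 c2).
Local Notation adjP := (glue_adj adj1 adj2 F1 F2 c1 c2).

Lemma norm_cycle i : norm (c2 i) = inl (c1 i).
Proof.
have [inj2 _ _ _] := hF2.
by rewrite /glue_norm; case: pickP => [j /eqP/inj2 -> | /(_ i)] //; rewrite eqxx.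
Qed.

Lemma norm_face y : y <> F2 -> faceP (norm y).
Proof.
move=> yF; rewrite /glue_norm; case: pickP => [i _ | nonbr] /=.
  exact: face_cycle_neq (proj2 hP1) hF1 i.
by split=> // i ciy; have := nonbr i; rewrite ciy eqxx.
Qed.

Lemma norm_glue_face y : faceP (inr y) -> norm y = inr y.
Proof.
by case=> _ nonbr; rewrite /glue_norm; case: pickP => [i /eqP /nonbr | ].
Qed.

Variables (A1 : Grp) (r1 : T1 -> A1) (A2 : Grp) (r2 : T2 -> A2).
Variables (G : Grp) (s : 'I_k -> G) (g1 : G -> A1) (g2 : G -> A2).
Hypotheses (hg1s : forall i, g1 (s i) = r1 (c1 i))
           (hg2s : forall i, g2 (s i) = r2 (c2 i)).
Variables (GP : Grp) (rP : T1 + T2 -> GP).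
Hypothesis hGP : IsRAPresented faceP adjP rP.
Variables (Q : Grp) (a : A1 -> Q) (b : A2 -> Q).
Hypothesis hQ : IsAmalgam g1 g2 a b.

Definition amalgam_gen (u : T1 + T2) : Q :=
  match u with inl x => a (r1 x) | inr y => b (r2 y) end.

(* Merged faces get consistent images, since a and b agree on G. *)
Lemma amalgam_gen_norm y : amalgam_gen (norm y) = b (r2 y).
Proof.
have [_ _ hab _] := hQ.
rewrite /glue_norm; case: pickP => [i /eqP <- | _] //=.
by rewrite -hg1s -hg2s hab.
Qed.

Lemma to_amalgam
  (hA1 : IsRAPresented (fun x => x <> F1) (fun x y => adj1 x y) r1)
  (hA2 : IsRAPresented (fun y => y <> F2) (fun x y => adj2 x y) r2) :
  exists phi : GP -> Q, is_hom phi /\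
    forall u, faceP u -> phi (rP u) = amalgam_gen u.
Proof.
have [ha hb _ _] := hQ.
have [[sq1 comm1] _] := hA1; have [[sq2 comm2] _] := hA2.
have rels : RA_rels faceP adjP amalgam_gen.
  split=> [[x | y] /= gu | u v _ _].
  - by rewrite -ha sq1 // hom_one.
  - by rewrite -hb sq2 ?hom_one //; case: gu.
  case=> [[x [y [xF yF xy -> ->]]] | [x [y [xF yF xy -> ->]]]].
    by rewrite /= -!ha comm1 // hom_one.
  by rewrite !amalgam_gen_norm -!hb comm2 // hom_one.
have [phi [hphi phiE _]] := proj2 hGP Q _ rels.
by exists phi.
Qed.

Lemma inl_rels :
  RA_rels (fun x => x <> F1) (fun x y => adj1 x y) (fun x => rP (inl x)).
Proof.
have [[sq comm] _] := hGP.
split=> [v gv | u v gu gv uv]; first exact: sq.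
by apply: comm => //; left; exists u, v.
Qed.

Lemma norm_rels :
  RA_rels (fun y => y <> F2) (fun x y => adj2 x y) (fun y => rP (norm y)).
Proof.
have [[sq comm] _] := hGP.
split=> [v gv | u v gu gv uv]; first exact/sq/norm_face.
by apply: comm; try apply: norm_face => //; right; exists u, v.
Qed.

Lemma from_amalgam
  (hA1 : IsRAPresented (fun x => x <> F1) (fun x y => adj1 x y) r1)
  (hA2 : IsRAPresented (fun y => y <> F2) (fun x y => adj2 x y) r2)
  (hG : IsRAPresented (fun _ => True) (@cyc_adj k) s)
  (hg1 : is_hom g1) (hg2 : is_hom g2) :
  exists psi : Q -> GP, [/\ is_hom psi,
    forall x, x <> F1 -> psi (a (r1 x)) = rP (inl x) &
    forall y, y <> F2 -> psi (b (r2 y)) = rP (norm y)].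
Proof.
have [_ _ _ univ] := hQ.
have [f1 [hf1 f1E _]] := proj2 hA1 GP _ inl_rels.
have [f2 [hf2 f2E _]] := proj2 hA2 GP _ norm_rels.
have c1F := face_cycle_neq (proj2 hP1) hF1.
have c2F := face_cycle_neq (proj2 hP2) hF2.
have compat x : f1 (g1 x) = f2 (g2 x).
  apply: (pres_hom_eq hG (hom_comp hg1 hf1) (hom_comp hg2 hf2)) => i _.
  by rewrite hg1s hg2s f1E // f2E // norm_cycle.
have [psi [hpsi psiA psiB _]] := univ GP f1 f2 hf1 hf2 compat.
by exists psi; split=> // [x xF | y yF]; rewrite ?psiA ?psiB ?f1E ?f2E.
Qed.

End Composition.

Theorem mainTheorem10
  (T1 T2 : finType) (adj1 : rel T1) (adj2 : rel T2)
  (F1 : T1) (F2 : T2) (k : nat) (c1 : 'I_k -> T1) (c2 : 'I_k -> T2)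
  (hk : 5 <= k)
  (hP1 : poly_graph adj1) (hP2 : poly_graph adj2)
  (hF1 : face_cycle adj1 F1 c1) (hF2 : face_cycle adj2 F2 c2)
  (* Gamma_(P1,F1) and Gamma_(P2,F2) *)
  (A1 : Grp) (r1 : T1 -> A1)
  (hA1 : IsRAPresented (fun x => x <> F1) (fun x y => adj1 x y) r1)
  (A2 : Grp) (r2 : T2 -> A2)
  (hA2 : IsRAPresented (fun y => y <> F2) (fun x y => adj2 x y) r2)
  (* G = reflection group of the right-angled k-gon, embedded as Gamma_F1, Gamma_F2 *)
  (G : Grp) (s : 'I_k -> G)
  (hG : IsRAPresented (fun _ => True) (@cyc_adj k) s)
  (g1 : G -> A1) (hg1 : is_hom g1) (hg1s : forall i, g1 (s i) = r1 (c1 i))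
  (g2 : G -> A2) (hg2 : is_hom g2) (hg2s : forall i, g2 (s i) = r2 (c2 i))
  (* Gamma_P for the composition P *)
  (GP : Grp) (rP : T1 + T2 -> GP)
  (hGP : IsRAPresented (glue_face F1 F2 c2) (glue_adj adj1 adj2 F1 F2 c1 c2) rP)
  (* an amalgamated free product Gamma_(P1,F1) *_G Gamma_(P2,F2) *)
  (Q : Grp) (a : A1 -> Q) (b : A2 -> Q)
  (hQ : IsAmalgam g1 g2 a b) :
  isomorphic GP Q.
Proof.
have [ha hb _ _] := hQ.
have [phi [hphi phiE]] := to_amalgam hg1s hg2s hGP hQ hA1 hA2.
have [psi [hpsi psiA psiB]] :=
  from_amalgam hP1 hP2 hF1 hF2 hg1s hg2s hGP hQ hA1 hA2 hG hg1 hg2.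
apply: (isomorphic_of_inverse hphi).
-
  move=> z; apply: (pres_hom_eq hGP (hom_comp hphi hpsi) (@hom_id GP)).
  case=> [x | y] face.
    by rewrite phiE // psiA.
  have [yF _] := face.
  by rewrite phiE //= psiB // (norm_glue_face c1 face).
-
  move=> z; apply: (amalgam_hom_eq hQ (hom_comp hpsi hphi) (@hom_id Q)).
    apply: (pres_hom_eq hA1 (hom_comp ha (hom_comp hpsi hphi)) ha) => x xF.
    by rewrite psiA // phiE.
  apply: (pres_hom_eq hA2 (hom_comp hb (hom_comp hpsi hphi)) hb) => y yF.
  rewrite psiB // phiE ?(amalgam_gen_norm hg1s hg2s hQ) //.
  exact (norm_face c2 hP1 hF1 yF).
Qed.
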